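(* Let $n\geq1$, let $a_1,\dots,a_{n-1}\in\mathbb{R}$ and $\alpha\in\mathbb{C}$, and let $$O_\alpha(z)=z^n\,\frac{\alpha+a_{n-1}z+\dots+a_1 z^{n-1}+z^n}{1+a_1 z+\dots+a_{n-1}z^{n-1}+\alpha z^n},$$ where $\alpha\neq0$ and $1+a_1+\dots+a_{n-1}+\alpha\neq0$, so that $z=1$ is a fixed point of $O_\alpha$. Let $$A=2n+2\sum_{j=1}^{n-1}(n-j)a_j,\qquad A'=1+\sum_{j=1}^{n-1}a_j,$$ with $A'\neq0$. Then: (i) $z=1$ is attracting if $|\alpha+A'|>|A|$; (ii) $z=1$ is indifferent if $|\alpha+A'|=|A|$; (iii) $z=1$ is repelling if $|\alpha+A'|<|A|$. Moreover, if $A=0$, the fixed point $z=1$ is superattracting.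
   Context: For a fixed point $z_0$ of a rational map $R$ with multiplier $\lambda=R'(z_0)$, $z_0$ is attracting if $|\lambda|<1$, superattracting if $\lambda=0$, repelling if $|\lambda|>1$, and indifferent if $|\lambda|=1$. *)

From mathcomp Require Import all_boot all_order all_algebra.
From mathcomp Require Export complex.
Set Implicit Arguments. Unset Strict Implicit. Unset Printing Implicit Defensive.
Import Order.TTheory GRing.Theory Num.Theory.
Local Open Scope ring_scope.

Section RationalMaps.
Variable F : numFieldType.

Definition ratmap_eval (p q : {poly F}) (z : F) : F := p.[z] / q.[z].

Definition is_fixed_point (p q : {poly F}) (z0 : F) : Prop :=
  q.[z0] != 0 /\ ratmap_eval p q z0 = z0.

Definition ratmap_deriv (p q : {poly F}) (z0 : F) : F :=
  (p^`() * q - p * q^`()).[z0] / (q.[z0]) ^+ 2.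

Definition multiplier (p q : {poly F}) (z0 : F) : F := ratmap_deriv p q z0.

Definition attracting_fp p q z0 :=
  is_fixed_point p q z0 /\ `|multiplier p q z0| < 1.
Definition superattracting_fp p q z0 :=
  is_fixed_point p q z0 /\ multiplier p q z0 = 0.
Definition repelling_fp p q z0 :=
  is_fixed_point p q z0 /\ `|multiplier p q z0| > 1.
Definition indifferent_fp p q z0 :=
  is_fixed_point p q z0 /\ `|multiplier p q z0| = 1.
End RationalMaps.

Section Oalpha.
Variable R : rcfType.
Local Open Scope complex_scope.

Definition O_num_factor (n : nat) (a : nat -> R) (alpha : R[i]) : {poly R[i]} :=
  alpha%:P + \sum_(1 <= j < n) ((a (n - j)%N)%:C)%:P * 'X^j + 'X^n.

Definition O_den (n : nat) (a : nat -> R) (alpha : R[i]) : {poly R[i]} :=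
  1 + \sum_(1 <= j < n) ((a j)%:C)%:P * 'X^j + alpha%:P * 'X^n.

Definition O_num (n : nat) (a : nat -> R) (alpha : R[i]) : {poly R[i]} :=
  'X^n * O_num_factor n a alpha.
End Oalpha.

(* Both factors P (reversed coefficients) and Q of O_alpha take the value
   B = alpha + A' at z = 1, so z = 1 is fixed and, by the quotient rule applied
   to z^n P / Q, the multiplier is n + (P'(1) - Q'(1)) / B.  Reflecting the
   index j to n - j in P' shows that n B + P'(1) - Q'(1) = A, so the multiplier
   is A / B and its modulus compares with 1 exactly as |A| compares with |B|. *)
From mathcomp Require Import all_boot all_order all_algebra.
From mathcomp Require Import complex.
From mathcomp Require Import zify ring.
Import Order.TTheory GRing.Theory Num.Theory.
Local Open Scope ring_scope.
Local Open Scope complex_scope.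

Lemma big_nat_reflect (M : nmodType) (n : nat) (F : nat -> nat -> M) :
  \sum_(1 <= j < n) F (n - j)%N j = \sum_(1 <= j < n) F j (n - j)%N.
Proof.
rewrite big_nat_rev; apply: eq_big_nat => j /andP[j_ge1 j_ltn].
by congr F; lia.
Qed.

Section PolyAtOne.
Variable C : comNzRingType.
Implicit Types (r : seq nat) (c : nat -> C).

Lemma horner1_sum_monomials r c :
  (\sum_(j <- r) (c j)%:P * 'X^j).[1] = \sum_(j <- r) c j.
Proof.
rewrite horner_sum; apply: eq_bigr => j _.
by rewrite hornerCM hornerXn expr1n mulr1.
Qed.

Lemma deriv_horner1_sum_monomials r c :
  (\sum_(j <- r) (c j)%:P * 'X^j)^`().[1] = \sum_(j <- r) c j * j%:R.
Proof.
rewrite (big_morph _ (@derivD C) (@deriv0 C)) horner_sum; apply: eq_bigr => j _.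
by rewrite mul_polyC derivZ derivXn hornerZ hornerMn hornerXn expr1n mulr_natr.
Qed.

End PolyAtOne.

Section FixedPointAtOne.
Context {F : numFieldType} (n : nat) {P Q : {poly F}}.
Hypotheses (Q1_neq0 : Q.[1] != 0) (PQ1 : P.[1] = Q.[1]).

Lemma fixed_point_Xn_mul : is_fixed_point ('X^n * P) Q 1.
Proof.
by split; rewrite // /ratmap_eval hornerM hornerXn expr1n mul1r PQ1 divff.
Qed.

Lemma multiplier_Xn_mul :
  multiplier ('X^n * P) Q 1 = (n%:R * Q.[1] + P^`().[1] - Q^`().[1]) / Q.[1].
Proof.
rewrite /multiplier /ratmap_deriv derivM derivXn !(hornerE, hornerMn).
rewrite !expr1n PQ1; field; exact: Q1_neq0.
Qed.

End FixedPointAtOne.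

Lemma fixed_point_classification {F : numFieldType} {p q : {poly F}} {z0 x y : F} :
  is_fixed_point p q z0 -> y != 0 -> multiplier p q z0 = x / y ->
  [/\ `|y| > `|x| -> attracting_fp p q z0,
      `|y| = `|x| -> indifferent_fp p q z0,
      `|y| < `|x| -> repelling_fp p q z0
    & x = 0 -> superattracting_fp p q z0].
Proof.
rewrite /attracting_fp /indifferent_fp /repelling_fp /superattracting_fp.
move=> fp y_neq0 ->; have y_gt0 : 0 < `|y| by rewrite normr_gt0.
rewrite normrM normfV ltr_pdivrMr // ltr_pdivlMr // !mul1r.
split=> [?|eq_yx|?|x0]; split=> //; first by rewrite -eq_yx divff ?normr_eq0.
by rewrite x0 mul0r.
Qed.

Section Oalpha.
Variables (R : rcfType) (n : nat) (a : nat -> R) (alpha : R[i]).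

Local Notation Sa := (\sum_(1 <= j < n) (a j)%:C).
Local Notation B := (1 + Sa + alpha).

Lemma O_num_factor_at1 : (O_num_factor n a alpha).[1] = B.
Proof.
rewrite /O_num_factor !hornerE horner1_sum_monomials expr1n.
by rewrite (big_nat_reflect _ n (fun i _ => (a i)%:C)); ring.
Qed.

Lemma O_den_at1 : (O_den n a alpha).[1] = B.
Proof. by rewrite /O_den !hornerE horner1_sum_monomials expr1n mulr1. Qed.

Lemma O_num_factor_deriv_at1 :
  (O_num_factor n a alpha)^`().[1]
  = \sum_(1 <= j < n) (a j)%:C * (n - j)%N%:R + n%:R.
Proof.
rewrite /O_num_factor !derivD derivC add0r !hornerD deriv_horner1_sum_monomials.
rewrite derivXn hornerMn hornerXn expr1n.
by rewrite (big_nat_reflect _ n (fun i j => (a i)%:C * j%:R)).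
Qed.

Lemma O_den_deriv_at1 :
  (O_den n a alpha)^`().[1] = \sum_(1 <= j < n) (a j)%:C * j%:R + alpha * n%:R.
Proof.
rewrite /O_den !derivD derivC add0r !hornerD deriv_horner1_sum_monomials.
by rewrite mul_polyC derivZ derivXn hornerZ hornerMn hornerXn expr1n.
Qed.

Lemma O_multiplier_numerator :
  n%:R * B + (O_num_factor n a alpha)^`().[1] - (O_den n a alpha)^`().[1]
  = (2 * n%:R + 2 * \sum_(1 <= j < n) (n - j)%N%:R * a j)%:C.
Proof.
rewrite O_num_factor_deriv_at1 O_den_deriv_at1.
set Sr := \sum_(1 <= j < n) _ * (n - j)%N%:R; set Sw := \sum_(1 <= j < n) _ * j%:R.
have Sr_add_Sw : Sr + Sw = n%:R * Sa.
  rewrite /Sr /Sw -big_split mulr_sumr /=; apply: eq_big_nat => j /andP[_ j_ltn].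
  by rewrite -mulrDr -natrD subnK 1?ltnW // mulrC.
have -> : Sw = n%:R * Sa - Sr by rewrite -Sr_add_Sw addrAC subrr add0r.
rewrite rmorphD !rmorphM rmorph_sum !rmorph_nat.
under [in RHS]eq_bigr do rewrite rmorphM rmorph_nat mulrC.
rewrite -/Sr; ring.
Qed.

End Oalpha.

Theorem proposition4p2 (R : rcfType) (n : nat) (a : nat -> R) (alpha : R[i])
  (hn : (1 <= n)%N)
  (halpha : alpha != 0)
  (hfix : 1 + \sum_(1 <= j < n) (a j)%:C + alpha != 0)
  (hA' : 1 + \sum_(1 <= j < n) a j != 0) :
  let A : R := 2 * n%:R + 2 * \sum_(1 <= j < n) (n - j)%N%:R * a j in
  let A' : R := 1 + \sum_(1 <= j < n) a j in
  let p := O_num n a alpha in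
  let q := O_den n a alpha in
  [/\ `|alpha + A'%:C| > `|A%:C| -> attracting_fp p q 1,
      `|alpha + A'%:C| = `|A%:C| -> indifferent_fp p q 1,
      `|alpha + A'%:C| < `|A%:C| -> repelling_fp p q 1
    & A = 0 -> superattracting_fp p q 1].
Proof.
move=> A A' p q.
have q1_neq0 : q.[1] != 0 by rewrite O_den_at1.
have PQ1 : (O_num_factor n a alpha).[1] = q.[1] by rewrite O_num_factor_at1 O_den_at1.
have B_def : alpha + A'%:C = q.[1].
  by rewrite O_den_at1 /A' rmorphD rmorph1 rmorph_sum addrC.
have mult : multiplier p q 1 = A%:C / (alpha + A'%:C).
  by rewrite /p /O_num multiplier_Xn_mul // B_def /q O_den_at1 O_multiplier_numerator.
have B_neq0 : alpha + A'%:C != 0 by rewrite B_def.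
have [attr indiff rep super] := fixed_point_classification
  (fixed_point_Xn_mul n q1_neq0 PQ1) B_neq0 mult.
by split=> // A0; apply: super; rewrite A0 rmorph0.
Qed.
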